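(* Let $I\subseteq\mathbb{R}[x_1,\dots,x_n]$ be an ideal. Then there exists a function $\Psi:\mathbb N\to\mathbb N$ such that $\mathrm{TH}_{\Psi(k)}(I)\subseteq \mathrm{TH}_k(\sqrt[\mathbb R]{I})$ for all $k\in\mathbb N$.
   Context: $\mathbb{R}[\mathbf x]=\mathbb{R}[x_1,\dots,x_n]$ and $\mathbb{R}[\mathbf x]_k$ denotes the polynomials of degree at most $k$. The real radical of an ideal $I$ is $\sqrt[\mathbb R]{I}=\{f\in\mathbb{R}[\mathbf x]: f^{2m}+\sum_i g_i^2\in I$ for some $m\in\mathbb N$ and $g_i\in\mathbb{R}[\mathbf x]\}$. A polynomial $h$ is $k$-sos modulo an ideal $J$ if there are $g_1,\dots,g_r\in\mathbb{R}[\mathbf x]_k$ with $h-\sum_i g_i^2\in J$. The $k$-th theta body is $\mathrm{TH}_k(J)=\{p\in\mathbb R^n: l(p)\ge 0$ for every $l\in\mathbb{R}[\mathbf x]_1$ that is $k$-sos modulo $J\}$. *)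

From mathcomp Require Import ssreflect ssrfun ssrbool eqtype ssrnat fintype.
From Stdlib Require Import Reals List.
Open Scope R_scope.

Set Implicit Arguments.
Unset Strict Implicit.

Inductive pexpr (n : nat) : Type :=
  | PConst : R -> pexpr n
  | PVar : 'I_n -> pexpr n
  | PAdd : pexpr n -> pexpr n -> pexpr n
  | PMul : pexpr n -> pexpr n -> pexpr n.

Fixpoint peval (n : nat) (e : pexpr n) (x : 'I_n -> R) : R :=
  match e with
  | PConst c => c
  | PVar i => x i
  | PAdd a b => peval a x + peval b x
  | PMul a b => peval a x * peval b x
  end.

Fixpoint pdeg (n : nat) (e : pexpr n) : nat :=
  match e with
  | PConst _ => 0%nat
  | PVar _ => 1%nat
  | PAdd a b => Nat.max (pdeg a) (pdeg b)
  | PMul a b => (pdeg a + pdeg b)%nat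
  end.

Definition mpoly (n : nat) := ('I_n -> R) -> R.

Definition deg_le (n : nat) (k : nat) (f : mpoly n) : Prop :=
  exists e : pexpr n, (pdeg e <= k)%nat /\ forall x, f x = peval e x.

Definition is_poly (n : nat) (f : mpoly n) : Prop := exists k, deg_le k f.

Definition is_ideal (n : nat) (I : mpoly n -> Prop) : Prop :=
  (forall f, I f -> is_poly f) /\
  I (fun _ => 0) /\
  (forall f g, I f -> I g -> I (fun x => f x + g x)) /\
  (forall f g, is_poly g -> I f -> I (fun x => g x * f x)).

Definition sum_sq (n : nat) (gs : list (mpoly n)) (x : 'I_n -> R) : R :=
  fold_right (fun g acc => (g x)^2 + acc) 0 gs.

Definition real_radical (n : nat) (I : mpoly n -> Prop) (f : mpoly n) : Prop :=
  is_poly f /\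
  exists (m : nat) (gs : list (mpoly n)),
    (forall g, In g gs -> is_poly g) /\
    I (fun x => f x ^ (2 * m) + sum_sq gs x).

Definition k_sos_mod (n : nat) (k : nat) (J : mpoly n -> Prop) (h : mpoly n) : Prop :=
  exists gs : list (mpoly n),
    (forall g, In g gs -> deg_le k g) /\
    J (fun x => h x - sum_sq gs x).

Definition TH (n : nat) (k : nat) (J : mpoly n -> Prop) (p : 'I_n -> R) : Prop :=
  forall l : mpoly n, deg_le 1 l -> k_sos_mod k J l -> 0 <= l p.

From mathcomp Require Import ssreflect ssrfun ssrbool eqtype ssrnat seq fintype zify.
From Stdlib Require Import Reals List Lia Lra ClassicalEpsilon FunctionalExtensionality Classical.
Open Scope R_scope.
Set Implicit Arguments. Unset Strict Implicit.

(* If h is in the real radical of I, then h^(2^j) + sigma lies in I for some j and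
   some sum of squares sigma, and a descent on j shows that eps - h and eps + h are
   sums of squares modulo I for every eps > 0, with certificates of a degree D that
   does not depend on eps.  Since the polynomials of degree at most 2k+1 form a
   finite-dimensional space, D can be chosen uniformly over all h of degree at most
   2k+1 in the real radical.  A linear l that is k-sos modulo the real radical
   therefore makes l + eps a max(k, D)-sos modulo I for every eps > 0, so l is
   nonnegative on TH_max(k, D)(I). *)

Lemma bound_uniform (A : Type) (P : nat -> A -> Prop) (L : list A) :
  (forall D D' a, (D <= D')%nat -> P D a -> P D' a) ->
  (forall a, In a L -> exists D, P D a) -> exists D, forall a, In a L -> P D a.
Proof.
move=> Pmono; elim: L => [|a L IH] HL; first by exists 0%nat.
have [D HD] := IH (fun b Hb => HL b (or_intror Hb)).
have [Da HDa] := HL a (or_introl erefl).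
exists (Nat.max Da D) => b [<-|Hb]; [apply: (Pmono Da) | apply: (Pmono D)]; auto; lia.
Qed.

Section Polynomials.
Variable n : nat.
Implicit Types (f g h : mpoly n) (gs : list (mpoly n)).

Lemma deg_le_mono k k' f : deg_le k f -> (k <= k')%nat -> deg_le k' f.
Proof. move=> [e [He Hf]] Hk; exists e; split => //; lia. Qed.

Lemma deg_le_ext k f g : (forall x, f x = g x) -> deg_le k f -> deg_le k g.
Proof. move=> Efg [e [He Hf]]; exists e; split => // x; by rewrite -Efg. Qed.

Lemma deg_le_const (c : R) : deg_le 0 (fun _ : 'I_n -> R => c).
Proof. by exists (PConst n c). Qed.

Lemma deg_le_add a b f g : deg_le a f -> deg_le b g ->
  deg_le (Nat.max a b) (fun x => f x + g x).
Proof.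
move=> [e [He Hf]] [e' [He' Hg]]; exists (PAdd e e'); split => [/=|x /=]; first lia.
by rewrite Hf Hg.
Qed.

Lemma deg_le_mul a b f g : deg_le a f -> deg_le b g ->
  deg_le (a + b) (fun x => f x * g x).
Proof.
move=> [e [He Hf]] [e' [He' Hg]]; exists (PMul e e'); split => [/=|x /=]; first lia.
by rewrite Hf Hg.
Qed.

Lemma deg_le_scale k (c : R) f : deg_le k f -> deg_le k (fun x => c * f x).
Proof.
move=> Hf; apply: deg_le_mono (deg_le_mul (deg_le_const c) Hf) _; lia.
Qed.

Lemma is_poly_ext f g : (forall x, f x = g x) -> is_poly f -> is_poly g.
Proof. move=> Efg [k Hf]; exists k; exact: deg_le_ext Hf. Qed.

Lemma is_poly_mul f g : is_poly f -> is_poly g -> is_poly (fun x => f x * g x).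
Proof. move=> [a Hf] [b Hg]; eexists; exact: deg_le_mul Hf Hg. Qed.

Lemma is_poly_pow f m : is_poly f -> is_poly (fun x => f x ^ m).
Proof.
move=> Hf; elim: m => [|m IH]; first by exists 0%nat; exact: deg_le_const.
exact: is_poly_ext (is_poly_mul Hf IH).
Qed.

Lemma is_poly_opp f : is_poly f -> is_poly (fun x => - f x).
Proof.
move=> [k Hf]; exists k; apply: deg_le_ext (deg_le_scale (-1) Hf) => x; ring.
Qed.

Lemma sum_sq_cat gs gs' x : sum_sq (gs ++ gs') x = sum_sq gs x + sum_sq gs' x.
Proof. elim: gs => [|g gs IH] /=; rewrite ?IH; ring. Qed.

Lemma sum_sq_map_mul gs c x :
  sum_sq (map (fun g y => c y * g y) gs) x = (c x) ^ 2 * sum_sq gs x.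
Proof. elim: gs => [|g gs IH] /=; rewrite ?IH; ring. Qed.

Lemma deg_le_sum_sq k gs : (forall g, In g gs -> deg_le k g) ->
  deg_le (k + k) (sum_sq gs).
Proof.
elim: gs => [|g gs IH] Hgs.
  by apply: deg_le_mono (deg_le_const 0) _; lia.
have Hg := Hgs g (or_introl erefl).
have Hsum := deg_le_add (deg_le_mul Hg Hg) (IH (fun g' Hg' => Hgs g' (or_intror Hg'))).
apply: deg_le_ext (deg_le_mono Hsum _) => [x /=|]; [ring | lia].
Qed.


Fixpoint comb (L : list (mpoly n)) (c : nat -> R) : mpoly n :=
  match L with
  | nil => fun _ => 0
  | v :: L' => fun x => c 0%nat * v x + comb L' (fun i => c i.+1) x
  end.

Definition inspan (L : list (mpoly n)) f := exists c, forall x, f x = comb L c x.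

Lemma comb_sub L c1 c2 (a : R) x :
  comb L (fun i => c1 i - a * c2 i) x = comb L c1 x - a * comb L c2 x.
Proof. elim: L c1 c2 => [|v L IH] c1 c2 /=; rewrite ?IH; ring. Qed.

Lemma comb0 L x : comb L (fun _ => 0) x = 0.
Proof. elim: L => [|v L IH] //=; rewrite IH; ring. Qed.

Lemma span_ext L f g : (forall x, f x = g x) -> inspan L f -> inspan L g.
Proof. move=> Efg [c Hc]; exists c => x; by rewrite -Efg. Qed.

Lemma span0 L : inspan L (fun _ => 0).
Proof. by exists (fun _ => 0) => x; rewrite comb0. Qed.

Lemma span_sub L f g (a : R) :
  inspan L f -> inspan L g -> inspan L (fun x => f x - a * g x).
Proof.
move=> [c1 H1] [c2 H2]; exists (fun i => c1 i - a * c2 i) => x.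
by rewrite comb_sub H1 H2.
Qed.

Lemma span_add L f g : inspan L f -> inspan L g -> inspan L (fun x => f x + g x).
Proof. move=> Hf Hg; apply: span_ext (span_sub (-1) Hf Hg) => x; ring. Qed.

Lemma span_scale L f (a : R) : inspan L f -> inspan L (fun x => a * f x).
Proof. move=> Hf; apply: span_ext (span_sub (- a) (span0 L) Hf) => x; ring. Qed.

Lemma span_mem L v : In v L -> inspan L v.
Proof.
elim: L => [|w L IH] //= [<-|Hv].
  by exists (fun i => if i is 0%nat then 1 else 0) => x /=; rewrite comb0; ring.
have [c Hc] := IH Hv; exists (fun i => if i is i'.+1 then c i' else 0) => x /=.
by rewrite Hc Rmult_0_l Rplus_0_l.
Qed.

Lemma span_mulr L M f g : inspan L f ->
  (forall v, In v L -> inspan M (fun x => v x * g x)) -> inspan M (fun x => f x * g x).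
Proof.
elim: L f => [|v L IH] f [c Hc] HLM.
  by apply: span_ext (span0 M) => x; rewrite Hc /=; ring.
have Htail : inspan M (fun x => comb L (fun i => c i.+1) x * g x).
  apply: IH => [|w Hw]; first by exists (fun i => c i.+1).
  exact: HLM (or_intror Hw).
have Hhead := span_scale (c 0%nat) (HLM v (or_introl erefl)).
apply: span_ext (span_add Hhead Htail) => x; rewrite Hc /=; ring.
Qed.

Lemma span_subset L M f : inspan L f -> (forall v, In v L -> inspan M v) -> inspan M f.
Proof.
move=> Hf HLM; have := @span_mulr L M f (fun _ => 1) Hf.
move=> HM; apply: span_ext (HM _) => [x|v Hv]; first ring.
apply: span_ext (HLM v Hv) => x; ring.
Qed.

(* By induction on [L]: if some element of [P] has a nonzero coefficient on the
   head of [L], it eliminates that head from every element of [P]. *)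
Lemma span_closed_basis L (P : mpoly n -> Prop) :
  (forall f, P f -> inspan L f) ->
  (forall f g (a : R), P f -> P g -> P (fun x => f x - a * g x)) ->
  exists B, (forall b, In b B -> P b) /\ (forall f, P f -> inspan B f).
Proof.
elim: L P => [|v L IH] P HPL HPsub.
  by exists nil; split => // f /HPL [c Hc]; exists c.
case: (classic (exists w c, P w /\ (forall x, w x = comb (v :: L) c x) /\ c 0%nat <> 0)).
- move=> [w [cw [Pw [Hw Hcw]]]].
  have [B [HBP HBspan]] := IH (fun f => P f /\ inspan L f) (fun f Hf => proj2 Hf)
    (fun f g a Hf Hg =>
       conj (HPsub f g a (proj1 Hf) (proj1 Hg)) (span_sub a (proj2 Hf) (proj2 Hg))).
  exists (w :: B); split => [b [<-|Hb] //|f Pf]; first exact: (proj1 (HBP b Hb)).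
  have [c Hc] := HPL f Pf.
  pose a := c 0%nat / cw 0%nat.
  have HLfw : inspan L (fun x => f x - a * w x).
    exists (fun i => c i.+1 - a * cw i.+1) => x.
    by rewrite comb_sub Hc Hw /= /a; field.
  have [d Hd] := HBspan _ (conj (HPsub f w a Pf Pw) HLfw).
  exists (fun i => if i is i'.+1 then d i' else a) => x /=.
  rewrite -Hd; ring.
- move=> Hno; apply: IH => // f Pf; have [c Hc] := HPL f Pf.
  have c0 : c 0%nat = 0 by apply: NNPP => Hc0; apply: Hno; exists f, c.
  by exists (fun i => c i.+1) => x; rewrite Hc /= c0; ring.
Qed.


Lemma In_enum (i : 'I_n) : In i (enum 'I_n).
Proof.
have : i \in enum 'I_n by rewrite mem_enum.
elim: (enum 'I_n) => [|j s IH] //; rewrite seq.in_cons => /orP [/eqP ->|/IH].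
  by left.
by right.
Qed.

Fixpoint words (d : nat) : list (list 'I_n) :=
  if d is d'.+1 then nil :: flat_map (fun i => map (cons i) (words d')) (enum 'I_n)
  else nil :: nil.

Lemma In_words d u : In u (words d) <-> (length u <= d)%coq_nat.
Proof.
elim: d u => [|d IH] u /=.
  by split => [[<-|[]] /=|]; [lia | case: u => [|i u] /=; [left | lia]].
split => [[<-|/in_flat_map [i [_ /in_map_iff [u' [<- /IH]]]]] /=|]; [lia | lia |].
case: u => [|i u] /= Hu; first by left.
right; apply/in_flat_map; exists i; split; first exact: In_enum.
by apply/in_map_iff; exists u; split => //; apply/IH; lia.
Qed.

Definition monomial (u : list 'I_n) : mpoly n :=
  fun x => fold_right (fun i acc => x i * acc) 1 u.

Lemma monomial_cat u v x : monomial (u ++ v) x = monomial u x * monomial v x.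
Proof. rewrite /monomial; elim: u => [|i u IH] /=; rewrite ?IH; ring. Qed.

Definition monomials (d : nat) : list (mpoly n) := map monomial (words d).

Lemma In_monomials d v :
  In v (monomials d) <-> exists u, v = monomial u /\ (length u <= d)%coq_nat.
Proof.
rewrite /monomials in_map_iff.
by split => [[u [<- /In_words Hu]]|[u [-> /In_words Hu]]]; exists u.
Qed.

Lemma span_monomials_mono a d f : (a <= d)%coq_nat ->
  inspan (monomials a) f -> inspan (monomials d) f.
Proof.
move=> Had Hf; apply: span_subset Hf _ => v /In_monomials [u [-> Hu]].
by apply: span_mem; apply/In_monomials; exists u; split => //; lia.
Qed.

Lemma span_monomials_mul a b f g : inspan (monomials a) f -> inspan (monomials b) g ->
  inspan (monomials (a + b)) (fun x => f x * g x).
Proof.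
move=> Hf Hg; apply: span_mulr Hf _ => v /In_monomials [u [-> Hu]].
apply: span_ext (span_mulr (g := monomial u) Hg _) => [x|w /In_monomials [u' [-> Hu']]].
  ring.
apply: span_ext (span_mem _) => [x|]; first by rewrite -monomial_cat.
by apply/In_monomials; exists (u' ++ u); split => //; rewrite length_app; lia.
Qed.

Lemma span_monomials_peval (e : pexpr n) d : (pdeg e <= d)%coq_nat ->
  inspan (monomials d) (peval e).
Proof.
elim: e d => [c|i|e1 IH1 e2 IH2|e1 IH1 e2 IH2] d /= Hd.
- have Hone : inspan (monomials d) (monomial nil).
    by apply: span_mem; apply/In_monomials; exists nil; split => //=; lia.
  by apply: span_ext (span_scale c Hone) => x; rewrite /monomial /=; ring.
- have Hxi : inspan (monomials d) (monomial (i :: nil)).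
    by apply: span_mem; apply/In_monomials; exists (i :: nil); split => //=; lia.
  by apply: span_ext Hxi => x; rewrite /monomial /=; ring.
- by apply: span_add; [apply: IH1 | apply: IH2]; lia.
- apply: span_monomials_mono (span_monomials_mul (IH1 _ (le_n _)) (IH2 _ (le_n _))).
  lia.
Qed.

Lemma deg_le_span_monomials d f : deg_le d f -> inspan (monomials d) f.
Proof.
move=> [e [He Hf]]; apply: span_ext (span_monomials_peval (d := d) _) => [x|].
  by rewrite Hf.
exact/leP.
Qed.

End Polynomials.

Section Ideal.
Variables (n : nat) (I : mpoly n -> Prop).
Hypothesis hI : is_ideal I.
Implicit Types (f g h y : mpoly n) (gs : list (mpoly n)).

Lemma ideal_ext f g : (forall x, f x = g x) -> I f -> I g.
Proof. by move=> Efg; rewrite (functional_extensionality g f (fun x => esym (Efg x))). Qed.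

Lemma ideal0 : I (fun _ => 0).
Proof. by case: hI => [_ []]. Qed.

Lemma idealD f g : I f -> I g -> I (fun x => f x + g x).
Proof. by case: hI => [_ [_ [HD _]]]; apply: HD. Qed.

Lemma idealM f g : is_poly g -> I f -> I (fun x => g x * f x).
Proof. by case: hI => [_ [_ [_ HM]]]; apply: HM. Qed.

Lemma idealZ (c : R) f : I f -> I (fun x => c * f x).
Proof. by apply: idealM; exists 0%nat; exact: deg_le_const. Qed.

Definition sos_le_eps (D : nat) h : Prop :=
  forall eps, 0 < eps -> k_sos_mod D I (fun x => eps - h x).

Definition sos_abs_le_eps (D : nat) h : Prop :=
  sos_le_eps D h /\ sos_le_eps D (fun x => - h x).

Lemma sos_le_eps_mono D D' h : (D <= D')%nat -> sos_le_eps D h -> sos_le_eps D' h.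
Proof.
move=> HD Hh eps Heps; have [gs [Hgs HI]] := Hh eps Heps.
by exists gs; split => // g Hg; apply: deg_le_mono (Hgs g Hg) HD.
Qed.

Lemma sos_le_eps_ext D h h' : (forall x, h x = h' x) -> sos_le_eps D h -> sos_le_eps D h'.
Proof. by move=> Eh; rewrite (functional_extensionality h' h (fun x => esym (Eh x))). Qed.

Lemma sos_le_eps0 D : sos_le_eps D (fun _ => 0).
Proof.
move=> eps Heps; exists ((fun _ => sqrt eps) :: nil); split.
  by move=> g [<-|[]]; apply: deg_le_mono (deg_le_const _ _) _; lia.
by apply: ideal_ext ideal0 => x /=; rewrite Rmult_1_r sqrt_sqrt; lra.
Qed.

Lemma sos_le_epsD D h1 h2 :
  sos_le_eps D h1 -> sos_le_eps D h2 -> sos_le_eps D (fun x => h1 x + h2 x).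
Proof.
move=> H1 H2 eps Heps.
have [gs1 [Hgs1 HI1]] := H1 (eps / 2) ltac:(lra).
have [gs2 [Hgs2 HI2]] := H2 (eps / 2) ltac:(lra).
exists (gs1 ++ gs2); split.
  by move=> g Hg; case: (in_app_or _ _ _ Hg); auto.
by apply: ideal_ext (idealD HI1 HI2) => x; rewrite sum_sq_cat; lra.
Qed.

Lemma sos_le_epsZ D (c : R) h : 0 <= c -> sos_le_eps D h -> sos_le_eps D (fun x => c * h x).
Proof.
case/Rle_lt_or_eq_dec => [Hc Hh eps Heps|<- _]; last first.
  by apply: sos_le_eps_ext (sos_le_eps0 D) => x; ring.
have [gs [Hgs HI]] := Hh (eps / c) ltac:(apply: Rdiv_lt_0_compat; lra).
exists (map (fun g x => sqrt c * g x) gs); split.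
  by move=> g /in_map_iff [g0 [<- Hg0]]; apply: deg_le_scale (Hgs g0 Hg0).
apply: ideal_ext (idealZ c HI) => x.
rewrite (sum_sq_map_mul gs (fun _ => sqrt c)) pow2_sqrt; [field | ]; lra.
Qed.

Lemma sos_abs_le_eps_mono D D' h :
  (D <= D')%nat -> sos_abs_le_eps D h -> sos_abs_le_eps D' h.
Proof. by move=> HD [H1 H2]; split; apply: sos_le_eps_mono HD _. Qed.

Lemma sos_abs_le_eps0 D : sos_abs_le_eps D (fun _ => 0).
Proof.
split; first exact: sos_le_eps0.
by apply: sos_le_eps_ext (sos_le_eps0 D) => x; ring.
Qed.

Lemma sos_abs_le_eps_sub D f g (a : R) :
  sos_abs_le_eps D f -> sos_abs_le_eps D g -> sos_abs_le_eps D (fun x => f x - a * g x).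
Proof.
move=> [Hf Hf'] [Hg Hg']; case: (Rle_lt_dec a 0) => Ha; split.
- have Hga := sos_le_epsZ (c := - a) ltac:(lra) Hg.
  by apply: sos_le_eps_ext (sos_le_epsD Hf Hga) => x; ring.
- have Hga := sos_le_epsZ (c := - a) ltac:(lra) Hg'.
  by apply: sos_le_eps_ext (sos_le_epsD Hf' Hga) => x; ring.
- have Hga := sos_le_epsZ (c := a) ltac:(lra) Hg'.
  by apply: sos_le_eps_ext (sos_le_epsD Hf Hga) => x; ring.
- have Hga := sos_le_epsZ (c := a) ltac:(lra) Hg.
  by apply: sos_le_eps_ext (sos_le_epsD Hf' Hga) => x; ring.
Qed.

Lemma sos_abs_le_eps_comb D B c :
  (forall b, In b B -> sos_abs_le_eps D b) -> sos_abs_le_eps D (comb B c).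
Proof.
elim: B c => [|b B IH] c HB /=; first exact: sos_abs_le_eps0.
have Htail := IH (fun i => c i.+1) (fun b' Hb' => HB b' (or_intror Hb')).
have [H1 H2] := sos_abs_le_eps_sub (- c 0%nat) Htail (HB b (or_introl erefl)).
split; [apply: sos_le_eps_ext H1 | apply: sos_le_eps_ext H2] => x; ring.
Qed.


(* Induction on [j], applying the hypothesis to [y^2] at precision [eps^2]:
   [eps - y - ((y - eps)^2 + sigma) / (2 eps) = (eps^2 - y^2 - sigma) / (2 eps)]. *)
Lemma sos_le_eps_of_pow2 j y s :
  is_poly y -> (forall g, In g s -> is_poly g) ->
  I (fun x => y x ^ (2 ^ j)%nat + sum_sq s x) -> exists D, sos_le_eps D y.
Proof.
elim: j y s => [|j IH] y s Hy Hs HI.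
  have [D HD] := bound_uniform (fun D D' g HDD' Hg => deg_le_mono Hg HDD') Hs.
  exists D => eps Heps; exists ((fun _ => sqrt eps) :: s); split.
    by move=> g [<-|Hg]; [apply: deg_le_mono (deg_le_const _ _) _; lia | exact: HD].
  apply: ideal_ext (idealZ (-1) HI) => x /=.
  rewrite !Rmult_1_r sqrt_sqrt; lra.
have HI2 : I (fun x => (y x ^ 2) ^ (2 ^ j)%nat + sum_sq s x).
  by apply: ideal_ext HI => x; rewrite -pow_mult Nat.pow_succ_r'.
have [D2 HD2] := IH _ s (is_poly_pow 2 Hy) Hs HI2.
have [d Hd] := Hy.
exists (Nat.max d D2) => eps Heps.
have [gs [Hgs HIgs]] := HD2 (eps ^ 2) ltac:(apply: pow_lt; lra).
pose r := sqrt (2 * eps).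
have Hr2 : r ^ 2 = 2 * eps by rewrite /r /= Rmult_1_r sqrt_sqrt; lra.
have Hr : 0 < r by apply: sqrt_lt_R0; lra.
exists (map (fun g x => / r * g x) ((fun x => y x - eps) :: gs)); split.
  move=> g /in_map_iff [g0 [<- [<-|Hg0]]]; apply: deg_le_scale.
    by apply: deg_le_mono (deg_le_add Hd (deg_le_const _ (- eps))) _; lia.
  by apply: deg_le_mono (Hgs g0 Hg0) _; lia.
apply: ideal_ext (idealZ (/ (2 * eps)) HIgs) => x.
have Hinv : (/ r) ^ 2 = / (2 * eps) by rewrite -Hr2; field; lra.
rewrite (sum_sq_map_mul _ (fun _ => / r)) Hinv /=; field; lra.
Qed.

Lemma real_radical_pow2 f : real_radical I f ->
  exists j s, (forall g, In g s -> is_poly g) /\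
    I (fun x => f x ^ (2 ^ j.+1)%nat + sum_sq s x).
Proof.
move=> [Hf [m [s [Hs HI]]]].
have Hm : (m < 2 ^ m)%nat by apply/ltP; apply: Nat.pow_gt_lin_r; lia.
pose r := (2 ^ m - m)%nat.
have Er : (2 ^ m.+1 = 2 * r + 2 * m)%nat by rewrite Nat.pow_succ_r' /r; lia.
exists m, (map (fun g x => f x ^ r * g x) s); split.
  by move=> g /in_map_iff [g0 [<- Hg0]]; apply: is_poly_mul (is_poly_pow r Hf) (Hs g0 Hg0).
apply: ideal_ext (idealM (is_poly_pow (2 * r)%nat Hf) HI) => x.
have Esq : (f x ^ r) ^ 2 = f x ^ (2 * r)%nat by rewrite -pow_mult Nat.mul_comm.
by rewrite sum_sq_map_mul Esq Er (pow_add _ (2 * r)); ring.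
Qed.

Lemma real_radical_sos_abs_le_eps h : real_radical I h -> exists D, sos_abs_le_eps D h.
Proof.
move=> Hrad; have Hh := proj1 Hrad.
have [j [s [Hs HI]]] := real_radical_pow2 Hrad.
have [D1 H1] := sos_le_eps_of_pow2 Hh Hs HI.
have HIopp : I (fun x => (- h x) ^ (2 ^ j.+1)%nat + sum_sq s x).
  by apply: ideal_ext HI => x; rewrite Nat.pow_succ_r' !pow_mult; f_equal; f_equal; ring.
have [D2 H2] := sos_le_eps_of_pow2 (is_poly_opp Hh) Hs HIopp.
exists (Nat.max D1 D2); split; [apply: sos_le_eps_mono _ H1 | apply: sos_le_eps_mono _ H2]; lia.
Qed.

(* The polynomials of degree at most [d] admitting certificates of some degree form a
   linear subspace of a finite-dimensional space; a finite basis of it bounds the degree. *)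
Lemma real_radical_uniform_bound d : exists D, forall h,
  deg_le d h -> real_radical I h -> sos_abs_le_eps D h.
Proof.
pose P h := deg_le d h /\ exists D, sos_abs_le_eps D h.
have P_sub f g a : P f -> P g -> P (fun x => f x - a * g x).
  move=> [Hf [D1 H1]] [Hg [D2 H2]]; split.
    apply: deg_le_ext (deg_le_mono (deg_le_add Hf (deg_le_scale (- a) Hg)) _) => [x|].
      ring.
    lia.
  exists (Nat.max D1 D2).
  by apply: sos_abs_le_eps_sub;
    [apply: sos_abs_le_eps_mono _ H1 | apply: sos_abs_le_eps_mono _ H2]; lia.
have [B [HBP HBspan]] :=
  span_closed_basis (fun f (Pf : P f) => deg_le_span_monomials (proj1 Pf)) P_sub.
have [D HD] := bound_uniform (@sos_abs_le_eps_mono) (fun b Hb => proj2 (HBP b Hb)).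
exists D => h Hh Hrad.
have [c Hc] := HBspan h (conj Hh (real_radical_sos_abs_le_eps Hrad)).
rewrite (functional_extensionality h (comb B c) Hc).
exact: sos_abs_le_eps_comb.
Qed.

Lemma k_sos_real_radical_approx k D l :
  (forall h, deg_le (2 * k + 1) h -> real_radical I h -> sos_abs_le_eps D h) ->
  deg_le 1 l -> k_sos_mod k (real_radical I) l ->
  forall eps, 0 < eps -> k_sos_mod (Nat.max k D) I (fun x => l x + eps).
Proof.
move=> HD Hl [gs [Hgs Hrad]] eps Heps.
have Hdeg : deg_le (2 * k + 1) (fun x => l x - sum_sq gs x).
  apply: deg_le_ext (deg_le_mono (deg_le_add Hl (deg_le_scale (-1) (deg_le_sum_sq Hgs))) _).
    by move=> x; ring.
  lia.
have [gs' [Hgs' HI]] := (HD _ Hdeg Hrad).2 eps Heps.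
exists (gs ++ gs'); split.
  move=> g Hg; case: (in_app_or _ _ _ Hg) => Hg'.
    by apply: deg_le_mono (Hgs g Hg') _; lia.
  by apply: deg_le_mono (Hgs' g Hg') _; lia.
by apply: ideal_ext HI => x; rewrite sum_sq_cat; ring.
Qed.

End Ideal.

Theorem mainTheorem6 (n : nat) (I : mpoly n -> Prop) (hI : is_ideal I) :
  exists Psi : nat -> nat,
    forall (k : nat) (p : 'I_n -> R), TH (Psi k) I p -> TH k (real_radical I) p.
Proof.
pose bound k := constructive_indefinite_description _
  (real_radical_uniform_bound hI (2 * k + 1)).
exists (fun k => Nat.max k (proj1_sig (bound k))) => k p Hp l Hl Hsos.
apply: Rnot_lt_le => Hneg.
have Happrox := k_sos_real_radical_approx (proj2_sig (bound k)) Hl Hsos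
  (eps := - l p / 2) ltac:(lra).
have Hl' : deg_le 1 (fun x => l x + - l p / 2).
  by apply: deg_le_mono (deg_le_add Hl (deg_le_const _ _)) _; lia.
have := Hp _ Hl' Happrox; lra.
Qed.
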